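(* Let $(X,d)$ be a doubling proper metric space and $(\varepsilon_k)$ a sequence of positive reals tending to $0$. Let $A\subset X$ be such that for each $x\in A$ there is a completely parametrized rectifiable curve $\gamma:(\mathbb R,0)\to(X,x)$ with $\sup_{0<|h|\le1/k}\left|\frac{d(\gamma(h),\gamma(-h))}{2|h|}-1\right|\le\varepsilon_k$ for all $k$. Let $x_0$ be a $t$-density point of $A$, let $r_n\to0$ be positive, and suppose $(X,x_0,d/r_n)$ converges in the pointed Gromov–Hausdorff topology to $(Z,z_0)$. Then every point of $Z$ lies on a bi-infinite geodesic $\gamma:\mathbb R\to Z$ (i.e. $d(\gamma(s),\gamma(t))=|s-t|$ for all $s,t$) which is a locally uniform limit of rescalings $t\mapsto\hat\gamma_n(r_nt)$ of such completely parametrized curves $\hat\gamma_n$ passing through points of $A$.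
   Context: Complete parametrization: given a rectifiable curve $\gamma:[0,\ell]\to X$ parametrized by arclength and $t_0\in[0,\ell]$, its complete parametrization at $t_0$ is $\gamma^0:\mathbb R\to X$ with $\gamma^0(t)=\gamma(t+t_0)$ on $[-t_0,\ell-t_0]$, constant equal to $\gamma(0)$ on $(-\infty,-t_0]$ and to $\gamma(\ell)$ on $[\ell-t_0,\infty)$. A point $a\in A$ is a $t$-density point of $A$ if for every $\varepsilon>0$, $\lim_{r\to0}\frac1r\sup_{z\in B(a,r)}d(z,A\cap B(a,(1+\varepsilon)r))=0$. Convergence of curves is uniform convergence on compact subsets of $\mathbb R$, in a common space into which the rescaled balls isometrically embed. *)

From Stdlib Require Import Reals Lra.
Open Scope R_scope.

Definition is_metric {X : Type} (d : X -> X -> R) : Prop :=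
  (forall x y, 0 <= d x y) /\
  (forall x y, d x y = 0 <-> x = y) /\
  (forall x y, d x y = d y x) /\
  (forall x y z, d x z <= d x y + d y z).

Definition doubling {X : Type} (d : X -> X -> R) : Prop :=
  exists N : nat, forall (x : X) (r : R), 0 < r ->
    exists c : nat -> X, forall y, d x y < 2 * r ->
      exists i, (i < N)%nat /\ d (c i) y < r.

Definition proper {X : Type} (d : X -> X -> R) : Prop :=
  forall (x : X) (Rad : R) (u : nat -> X),
    (forall n, d x (u n) <= Rad) ->
    exists (phi : nat -> nat) (y : X),
      (forall k, (phi k < phi (S k))%nat) /\
      d x y <= Rad /\
      Un_cv (fun k => d (u (phi k)) y) 0.

Fixpoint psum {X : Type} (d : X -> X -> R) (g : R -> X) (p : nat -> R) (n : nat) : R :=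
  match n with
  | O => 0
  | S m => psum d g p m + d (g (p m)) (g (p (S m)))
  end.

Definition partition (a b : R) (p : nat -> R) (n : nat) : Prop :=
  p O = a /\ p n = b /\ forall i, (i < n)%nat -> p i <= p (S i).

Definition length_eq {X : Type} (d : X -> X -> R) (g : R -> X) (a b L : R) : Prop :=
  is_lub (fun s => exists (p : nat -> R) (n : nat), partition a b p n /\ s = psum d g p n) L.

(* gamma : [0,l] -> X parametrized by arclength (only values on [0,l] matter) *)
Definition arclength_param {X : Type} (d : X -> X -> R) (gamma : R -> X) (l : R) : Prop :=
  0 <= l /\ forall a b, 0 <= a -> a <= b -> b <= l -> length_eq d gamma a b (b - a).

Definition complete_param {X : Type} (gamma : R -> X) (l t0 : R) (g : R -> X) : Prop :=
  forall t,
    (- t0 <= t <= l - t0 -> g t = gamma (t + t0)) /\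
    (t <= - t0 -> g t = gamma 0) /\
    (l - t0 <= t -> g t = gamma l).

Definition CP_curve {X : Type} (d : X -> X -> R) (g : R -> X) (x : X) : Prop :=
  exists (gamma : R -> X) (l t0 : R),
    arclength_param d gamma l /\ 0 <= t0 <= l /\ complete_param gamma l t0 g /\ g 0 = x.

Definition eps_good {X : Type} (d : X -> X -> R) (eps : nat -> R) (g : R -> X) : Prop :=
  forall k : nat, (1 <= k)%nat -> forall h : R, 0 < Rabs h -> Rabs h <= / INR k ->
    Rabs (d (g h) (g (- h)) / (2 * Rabs h) - 1) <= eps k.

(* a in A and for every eps>0,
   lim_{r->0} (1/r) sup_{z in B(a,r)} dist(z, A ∩ B(a,(1+eps) r)) = 0,
   written out with quantifiers (dist to the empty set being +infinity). *)
Definition t_density_point {X : Type} (d : X -> X -> R) (A : X -> Prop) (a : X) : Prop :=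
  A a /\
  forall eps, 0 < eps -> forall eta, 0 < eta ->
    exists delta, 0 < delta /\ forall r, 0 < r -> r < delta ->
      forall z, d a z < r ->
        exists b, A b /\ d a b < (1 + eps) * r /\ d z b <= eta * r.

(* (X, x0, d / r n) -> (Z, z0), realized by isometric embeddings into a common
   metric space (W, dW): iota n : (X, d / r n) -> W, iotaZ : Z -> W,
   base points converge, and the images converge in the local Hausdorff sense. *)
Definition pGH_realization {X Z W : Type} (d : X -> X -> R) (x0 : X) (r : nat -> R)
    (dZ : Z -> Z -> R) (z0 : Z) (dW : W -> W -> R)
    (iota : nat -> X -> W) (iotaZ : Z -> W) : Prop :=
  is_metric dW /\
  (forall n x y, dW (iota n x) (iota n y) = d x y / r n) /\
  (forall z z', dW (iotaZ z) (iotaZ z') = dZ z z') /\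
  Un_cv (fun n => dW (iota n x0) (iotaZ z0)) 0 /\
  (forall Rad eps, 0 < Rad -> 0 < eps -> exists N, forall n, (N <= n)%nat ->
     (forall x, d x0 x / r n <= Rad -> exists z, dW (iota n x) (iotaZ z) <= eps) /\
     (forall z, dZ z0 z <= Rad -> exists x, dW (iota n x) (iotaZ z) <= eps)).

Definition pGH_converges {X Z : Type} (d : X -> X -> R) (x0 : X) (r : nat -> R)
    (dZ : Z -> Z -> R) (z0 : Z) : Prop :=
  exists (W : Type) (dW : W -> W -> R) (iota : nat -> X -> W) (iotaZ : Z -> W),
    pGH_realization d x0 r dZ z0 dW iota iotaZ.

(* Fix z in Z. Density of A at x0 and the Hausdorff approximation give points a_m of A
   whose images in the rescaled spaces converge to z; let g_m be their curves. The rescaled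
   curves t |-> g_m (r t) are 1-Lipschitz and stay near bounded, hence compact, parts of Z,
   so a diagonal Arzela-Ascoli argument over a countable dense grid of times extracts a
   locally uniformly convergent subsequence with limit gam : R -> Z, gam 0 = z. The limit is
   1-Lipschitz, and the eps_k-condition, which at scale r_n only involves |h| = r_n t -> 0,
   gives d(gam t, gam (-t)) >= 2t; a 1-Lipschitz curve with this symmetric stretch is an
   isometric embedding. *)

From Stdlib Require Import Reals Lra Lia ZArith ClassicalEpsilon Cantor.
Open Scope R_scope.

Definition strictly_increasing (s : nat -> nat) : Prop := forall k, (s k < s (S k))%nat.

Lemma strictly_increasing_le s :
  strictly_increasing s -> forall i j, (i <= j)%nat -> (s i <= s j)%nat.
Proof.
  intros Hs i j Hij. induction Hij as [|j _ IH]; [lia|]. specialize (Hs j). lia.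
Qed.

Lemma strictly_increasing_ge_id s : strictly_increasing s -> forall k, (k <= s k)%nat.
Proof.
  intros Hs k. induction k as [|k IH]; [lia|]. specialize (Hs k). lia.
Qed.

Lemma strictly_increasing_comp s t :
  strictly_increasing s -> strictly_increasing t -> strictly_increasing (fun k => s (t k)).
Proof.
  intros Hs Ht k. pose proof (strictly_increasing_le s Hs (S (t k)) (t (S k)) (Ht k)).
  specialize (Hs (t k)). lia.
Qed.

Lemma frequently_strict_subseq (P : nat -> nat -> Prop) :
  (forall m L, exists n, (L <= n)%nat /\ P m n) ->
  exists N, strictly_increasing N /\ forall m, P m (N m).
Proof.
  intro H.
  destruct (choice (fun (p : nat * nat) n => (snd p <= n)%nat /\ P (fst p) n))
    as [c Hc].
  { intros [m L]. apply H. }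
  set (N := fix N m := match m with O => c (0, 0)%nat | S m' => c (S m', S (N m')) end).
  exists N. split.
  - intro m. exact (proj1 (Hc (S m, S (N m)))).
  - intros [|m].
    + exact (proj2 (Hc (0, 0)%nat)).
    + exact (proj2 (Hc (S m, S (N m)))).
Qed.

Lemma inv_INR_succ_bounds n : 0 < / (INR n + 1) <= 1.
Proof.
  pose proof (pos_INR n). split.
  - apply Rinv_0_lt_compat. lra.
  - rewrite <- Rinv_1. apply Rinv_le_contravar; lra.
Qed.

Lemma inv_INR_succ_lt e : 0 < e -> exists N, forall n, (N <= n)%nat -> / (INR n + 1) < e.
Proof.
  intros He. destruct (archimed_cor1 e He) as [N [HN HN0]]. exists N. intros n Hn.
  apply Rle_lt_trans with (/ INR N); auto.
  apply Rinv_le_contravar.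
  - apply lt_0_INR. lia.
  - apply le_INR in Hn. lra.
Qed.

Lemma Rabs_le_bounds x b : Rabs x <= b -> - b <= x <= b.
Proof. unfold Rabs. destruct Rcase_abs; lra. Qed.

Lemma Un_cv_0_lt (u : nat -> R) :
  Un_cv u 0 -> forall e, 0 < e -> exists N, forall n, (N <= n)%nat -> u n < e.
Proof.
  intros H e He. destruct (H e He) as [N HN]. exists N. intros n Hn.
  specialize (HN n Hn). unfold R_dist in HN. rewrite Rminus_0_r in HN.
  pose proof (Rle_abs (u n)). lra.
Qed.

Lemma Un_cv_0_nonneg (u : nat -> R) :
  (forall n, 0 <= u n) ->
  (forall e, 0 < e -> exists N, forall n, (N <= n)%nat -> u n < e) -> Un_cv u 0.
Proof.
  intros Hu H e He. destruct (H e He) as [N HN]. exists N. intros n Hn.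
  specialize (HN n Hn). pose proof (Hu n). unfold R_dist.
  rewrite Rminus_0_r, Rabs_right; lra.
Qed.

Section Metric.
Context {X : Type} (d : X -> X -> R) (hd : is_metric d).

Lemma dist_nonneg x y : 0 <= d x y.
Proof. apply hd. Qed.

Lemma dist_refl x : d x x = 0.
Proof. apply hd. reflexivity. Qed.

Lemma dist_eq0 x y : d x y = 0 -> x = y.
Proof. apply hd. Qed.

Lemma dist_sym x y : d x y = d y x.
Proof. apply hd. Qed.

Lemma dist_triangle x y z : d x z <= d x y + d y z.
Proof. apply hd. Qed.

Lemma dist_le_of_approx a b c :
  (forall e, 0 < e -> exists p q, d p a <= e /\ d q b <= e /\ d p q <= c) -> d a b <= c.
Proof.
  intro H. apply le_epsilon. intros e He.
  destruct (H (e / 2)) as [p [q [Hp [Hq Hpq]]]]; [lra|].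
  pose proof (dist_triangle a p b). pose proof (dist_triangle p q b).
  pose proof (dist_sym a p). lra.
Qed.

Lemma dist_ge_of_approx a b c :
  (forall e, 0 < e -> exists p q, d p a <= e /\ d q b <= e /\ c <= d p q + e) -> c <= d a b.
Proof.
  intro H. apply le_epsilon. intros e He.
  destruct (H (e / 3)) as [p [q [Hp [Hq Hpq]]]]; [lra|].
  pose proof (dist_triangle p a q). pose proof (dist_triangle a b q).
  pose proof (dist_sym b q). lra.
Qed.

End Metric.
Lemma diagonal_subseq_cv {W Y : Type} (dist : W -> Y -> R) (u : nat -> nat -> W) :
  (forall i s, strictly_increasing s -> exists rho y,
     strictly_increasing rho /\ Un_cv (fun k => dist (u i (s (rho k))) y) 0) ->
  exists psi, strictly_increasing psi /\
    forall i, exists y, Un_cv (fun k => dist (u i (psi k)) y) 0.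
Proof.
  intro Hsub.
  assert (Hnext : forall p : nat * (nat -> nat), exists rho, strictly_increasing rho /\
    (strictly_increasing (snd p) ->
     exists y, Un_cv (fun k => dist (u (fst p) (snd p (rho k))) y) 0)).
  { intros [i s]. simpl. destruct (classic (strictly_increasing s)) as [Hs|Hs].
    - destruct (Hsub i s Hs) as [rho [y [Hrho Hy]]].
      exists rho. split; [exact Hrho|]. intros _. exists y. exact Hy.
    - exists (fun k => k). split; [intro k; lia | contradiction]. }
  destruct (choice _ Hnext) as [next Hnext'].
  set (sg := fix sg (i : nat) : nat -> nat :=
         match i with O => fun k => k | S i' => fun k => sg i' (next (i', sg i') k) end).
  assert (Hsg : forall i, strictly_increasing (sg i)).
  { induction i as [|i IH]; [intro k; simpl; lia|].
    change (strictly_increasing (fun k => sg i (next (i, sg i) k))).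
    apply strictly_increasing_comp; [exact IH | apply (Hnext' (i, sg i))]. }
  assert (Hnest : forall i j k, (i <= j)%nat -> exists m, (k <= m)%nat /\ sg j k = sg i m).
  { intros i j k Hij. revert k. induction Hij as [|j _ IH]; intro k.
    - exists k. split; [lia | reflexivity].
    - destruct (IH (next (j, sg j) k)) as [m [Hm E]]. exists m. split; [|exact E].
      pose proof (strictly_increasing_ge_id _ (proj1 (Hnext' (j, sg j))) k). lia. }
  exists (fun k => sg (S k) k). split.
  - intro k. change (sg (S (S k)) (S k)) with (sg (S k) (next (S k, sg (S k)) (S k))).
    pose proof (strictly_increasing_ge_id _ (proj1 (Hnext' (S k, sg (S k)))) (S k)) as Hge.
    pose proof (strictly_increasing_le _ (Hsg (S k)) _ _ Hge). pose proof (Hsg (S k) k). lia.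
  - intro i. destruct (proj2 (Hnext' (i, sg i)) (Hsg i)) as [y Hy]. exists y.
    intros e He. destruct (Hy e He) as [N HN]. exists (Nat.max N (S i)). intros k Hk.
    destruct (Hnest (S i) (S k) k ltac:(lia)) as [m [Hm E]]. rewrite E.
    exact (HN m ltac:(lia)).
Qed.

Definition grid (i : nat) : R :=
  let (a, b) := Cantor.of_nat i in - INR b + INR a / (INR b + 1).

Lemma floor_nat x : 0 <= x -> exists a : nat, INR a <= x < INR a + 1.
Proof.
  intro Hx. destruct (archimed x) as [H1 H2].
  assert (Hpos : (0 < up x)%Z) by (apply lt_IZR; lra).
  exists (Z.to_nat (up x - 1)).
  rewrite INR_IZR_INZ, Z2Nat.id by lia. rewrite minus_IZR. simpl. lra.
Qed.

Lemma grid_cover T delta : 0 < T -> 0 < delta ->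
  exists b M, forall t, Rabs t <= T ->
    exists a, (a <= M)%nat /\ Rabs (t - grid (Cantor.to_nat (a, b))) <= delta.
Proof.
  intros HT Hd.
  destruct (archimed_cor1 delta Hd) as [N1 [HN1 HN1p0]].
  destruct (floor_nat T) as [N2 HN2]; [lra|].
  set (b := Nat.max N1 (S N2)).
  assert (Hb1 : INR N1 <= INR b) by (apply le_INR; lia).
  assert (Hb2 : INR (S N2) <= INR b) by (apply le_INR; lia).
  rewrite S_INR in Hb2.
  assert (HN1p : 0 < INR N1) by (apply lt_0_INR; lia).
  exists b, (2 * b * (b + 1))%nat. intros t Ht.
  assert (HtT : - INR b <= t <= INR b) by (apply Rabs_le_bounds in Ht; lra).
  set (B := INR b + 1).
  assert (HB : 0 < B) by (unfold B; lra).
  destruct (floor_nat ((t + INR b) * B)) as [a Ha]; [apply Rmult_le_pos; lra|].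
  exists a. split.
  - apply INR_le. rewrite !mult_INR, plus_INR. simpl.
    assert ((t + INR b) * B <= (2 * INR b) * B) by (apply Rmult_le_compat_r; lra).
    unfold B in *. lra.
  - unfold grid. rewrite Cantor.cancel_of_to. fold B.
    replace (t - (- INR b + INR a / B)) with (((t + INR b) * B - INR a) / B) by (field; lra).
    rewrite Rabs_right.
    2:{ apply Rle_ge; unfold Rdiv; apply Rmult_le_pos; [lra | left; apply Rinv_0_lt_compat; lra]. }
    apply Rle_trans with (/ B).
    { unfold Rdiv. rewrite <- (Rmult_1_l (/ B)) at 2.
      apply Rmult_le_compat_r; [left; apply Rinv_0_lt_compat|]; lra. }
    apply Rle_trans with (/ INR N1); [|lra].
    apply Rinv_le_contravar; unfold B; lra.
Qed.

Lemma eventually_forall_le (P : nat -> nat -> Prop) (M : nat) :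
  (forall a, (a <= M)%nat -> exists K, forall k, (K <= k)%nat -> P a k) ->
  exists K, forall a k, (a <= M)%nat -> (K <= k)%nat -> P a k.
Proof.
  induction M as [|M IH]; intro H.
  - destruct (H 0%nat (le_n 0)) as [K HK]. exists K. intros a k Ha.
    replace a with 0%nat by lia. auto.
  - destruct IH as [K1 HK1]; [intros a Ha; apply H; lia|].
    destruct (H (S M) (le_n _)) as [K2 HK2].
    exists (Nat.max K1 K2). intros a k Ha Hk.
    destruct (Nat.eq_dec a (S M)) as [->|]; [apply HK2 | apply HK1]; lia.
Qed.

Lemma arclength_param_lipschitz {X : Type} (d : X -> X -> R) (gamma : R -> X) l :
  is_metric d -> arclength_param d gamma l ->
  forall a b, 0 <= a <= l -> 0 <= b <= l -> d (gamma a) (gamma b) <= Rabs (a - b).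
Proof.
  intros hd [_ harc].
  assert (Hle : forall a b, 0 <= a -> a <= b -> b <= l -> d (gamma a) (gamma b) <= b - a).
  { intros a b Ha Hab Hb. apply (proj1 (harc a b Ha Hab Hb)).
    exists (fun i => match i with O => a | _ => b end), 1%nat. split.
    - split; [reflexivity|]. split; [reflexivity|]. intros [|i] Hi; [lra | lia].
    - simpl. ring. }
  intros a b Ha Hb. destruct (Rle_dec a b).
  - rewrite Rabs_left1 by lra. specialize (Hle a b). lra.
  - rewrite Rabs_right by lra. rewrite (dist_sym d hd). specialize (Hle b a). lra.
Qed.

Lemma CP_curve_at0 {X : Type} (d : X -> X -> R) g x : CP_curve d g x -> g 0 = x.
Proof. intros [gamma [l [t0 [_ [_ [_ E]]]]]]. exact E. Qed.

Lemma CP_curve_lipschitz {X : Type} (d : X -> X -> R) g x :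
  is_metric d -> CP_curve d g x -> forall u v, d (g u) (g v) <= Rabs (u - v).
Proof.
  intros hd [gamma [l [t0 [harc [ht0 [hcp _]]]]]].
  (* the complete parametrization is gamma composed with a clamp of t + t0 to [0, l] *)
  set (c := fun t => Rmax 0 (Rmin l (t + t0))).
  assert (Hc : forall t, g t = gamma (c t) /\ 0 <= c t <= l).
  { intro t. destruct (hcp t) as [H1 [H2 H3]]. unfold c, Rmax, Rmin.
    destruct (Rle_dec t (- t0)); [rewrite H2 by lra|
      destruct (Rle_dec (l - t0) t); [rewrite H3 by lra | rewrite H1 by lra]];
      repeat destruct Rle_dec; try lra; split; try lra; f_equal; lra. }
  intros u v. destruct (Hc u) as [-> Hu]. destruct (Hc v) as [-> Hv].
  eapply Rle_trans; [apply (arclength_param_lipschitz d gamma l hd harc); auto|].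
  unfold c, Rmax, Rmin. destruct ht0.
  repeat destruct Rle_dec; unfold Rabs; repeat destruct Rcase_abs; lra.
Qed.

Lemma eps_good_stretch {X : Type} (d : X -> X -> R) eps g k h :
  eps_good d eps g -> (1 <= k)%nat -> 0 < h -> h <= / INR k ->
  2 * h * (1 - eps k) <= d (g h) (g (- h)).
Proof.
  intros Hg Hk Hh Hhk. specialize (Hg k Hk h). rewrite Rabs_right in Hg by lra.
  specialize (Hg Hh Hhk). apply Rabs_le_bounds in Hg.
  replace (d (g h) (g (- h))) with (d (g h) (g (- h)) / (2 * h) * (2 * h)) by (field; lra).
  rewrite (Rmult_comm _ (2 * h)). apply Rmult_le_compat_l; lra.
Qed.

Lemma lipschitz_stretch_isometry {Z : Type} (dZ : Z -> Z -> R) (gam : R -> Z) :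
  is_metric dZ ->
  (forall u v, dZ (gam u) (gam v) <= Rabs (u - v)) ->
  (forall t, 0 < t -> 2 * t <= dZ (gam t) (gam (- t))) ->
  forall u v, dZ (gam u) (gam v) = Rabs (u - v).
Proof.
  intros hZ Hlip Hstretch.
  assert (Hge : forall u v, u <= v -> v - u <= dZ (gam u) (gam v)).
  { intros u v Huv.
    set (T := Rmax (Rabs u) (Rabs v) + 1).
    assert (HuT : - T <= u) by
      (pose proof (Rmax_l (Rabs u) (Rabs v)); unfold T;
       destruct (Rabs_le_bounds u (Rabs u) (Rle_refl _)); lra).
    assert (HvT : v <= T) by
      (pose proof (Rmax_r (Rabs u) (Rabs v)); unfold T;
       destruct (Rabs_le_bounds v (Rabs v) (Rle_refl _)); lra).
    assert (HT : 0 < T) by (pose proof (Rmax_l (Rabs u) (Rabs v)); pose proof (Rabs_pos u);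
                           unfold T; lra).
    (* 2T <= d(T,-T) <= (T - v) + d(v,u) + (u + T) *)
    pose proof (Hstretch T HT).
    pose proof (dist_triangle dZ hZ (gam T) (gam v) (gam (- T))).
    pose proof (dist_triangle dZ hZ (gam v) (gam u) (gam (- T))).
    pose proof (dist_sym dZ hZ (gam v) (gam u)).
    pose proof (Hlip T v). pose proof (Hlip u (- T)).
    rewrite Rabs_right in * by lra. lra. }
  intros u v. apply Rle_antisym; [apply Hlip|].
  destruct (Rle_dec u v).
  - rewrite Rabs_left1 by lra. specialize (Hge u v). lra.
  - rewrite Rabs_right by lra. rewrite (dist_sym dZ hZ). apply Hge. lra.
Qed.

Definition locally_uniform_cv {W : Type} (dW : W -> W -> R)
    (f : nat -> R -> W) (g : R -> W) : Prop :=
  forall T e, 0 < T -> 0 < e -> exists K, forall k, (K <= k)%nat ->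
    forall t, Rabs t <= T -> dW (f k t) (g t) <= e.

Lemma locally_uniform_cv_at {W : Type} (dW : W -> W -> R) f g t :
  locally_uniform_cv dW f g ->
  forall e, 0 < e -> exists K, forall k, (K <= k)%nat -> dW (f k t) (g t) <= e.
Proof.
  intros Hcv e He. destruct (Hcv (Rabs t + 1) e) as [K HK]; [pose proof (Rabs_pos t); lra | lra |].
  exists K. intros k Hk. apply HK; [exact Hk | lra].
Qed.

Section ProperTarget.
Variables (W Z : Type) (dW : W -> W -> R) (dZ : Z -> Z -> R) (iotaZ : Z -> W) (z0 : Z).
Hypothesis hW : is_metric dW.
Hypothesis hiotaZ : forall z z', dW (iotaZ z) (iotaZ z') = dZ z z'.
Hypothesis hZprop : proper dZ.

Definition near_ball (C : R) (w : nat -> W) : Prop :=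
  forall e, 0 < e -> exists K, forall k, (K <= k)%nat ->
    exists z, dZ z0 z <= C /\ dW (w k) (iotaZ z) <= e.

Lemma near_ball_subseq_cv C w : near_ball C w ->
  exists rho y, strictly_increasing rho /\ Un_cv (fun k => dW (w (rho k)) (iotaZ y)) 0.
Proof.
  intro Hw.
  destruct (frequently_strict_subseq
              (fun m n => exists z, dZ z0 z <= C /\ dW (w n) (iotaZ z) <= / (INR m + 1)))
    as [N [HN Hz]].
  { intros m L. destruct (Hw _ (proj1 (inv_INR_succ_bounds m))) as [K HK].
    exists (Nat.max K L). split; [lia | apply HK; lia]. }
  destruct (choice _ Hz) as [zs Hzs].
  destruct (hZprop z0 C zs (fun m => proj1 (Hzs m))) as [phi [y [Hphi [_ Hcv]]]].
  exists (fun k => N (phi k)), y. split; [apply strictly_increasing_comp; assumption|].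
  pose proof (Un_cv_0_lt _ Hcv) as Hlt. clear Hcv.
  apply Un_cv_0_nonneg; [intro; apply (dist_nonneg dW hW)|].
  intros e He.
  destruct (Hlt (e / 2)) as [K1 HK1]; [lra|].
  destruct (inv_INR_succ_lt (e / 2)) as [K2 HK2]; [lra|].
  exists (Nat.max K1 K2). intros k Hk.
  pose proof (strictly_increasing_ge_id phi Hphi k).
  pose proof (HK1 k ltac:(lia)). pose proof (HK2 (phi k) ltac:(lia)).
  pose proof (proj2 (Hzs (phi k))).
  pose proof (dist_triangle dW hW (w (N (phi k))) (iotaZ (zs (phi k))) (iotaZ y)) as Htri.
  rewrite hiotaZ in Htri. lra.
Qed.

Lemma near_ball_cauchy_cv C w : near_ball C w ->
  (forall e, 0 < e -> exists K, forall k l, (K <= k)%nat -> (K <= l)%nat -> dW (w k) (w l) <= e) ->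
  exists y, Un_cv (fun k => dW (w k) (iotaZ y)) 0.
Proof.
  intros Hw Hcauchy.
  destruct (near_ball_subseq_cv C w Hw) as [rho [y [Hrho Hcv]]]. exists y.
  pose proof (Un_cv_0_lt _ Hcv) as Hlt. clear Hcv.
  apply Un_cv_0_nonneg; [intro; apply (dist_nonneg dW hW)|].
  intros e He.
  destruct (Hcauchy (e / 2)) as [K HK]; [lra|].
  destruct (Hlt (e / 2)) as [J HJ]; [lra|].
  exists K. intros k Hk.
  set (j := Nat.max J K). pose proof (strictly_increasing_ge_id rho Hrho j).
  pose proof (HJ j ltac:(lia)). pose proof (HK k (rho j) Hk ltac:(lia)).
  pose proof (dist_triangle dW hW (w k) (w (rho j)) (iotaZ y)).
  lra.
Qed.

Section ArzelaAscoli.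
Variable f : nat -> R -> W.
Hypothesis f_lip : forall k u v, dW (f k u) (f k v) <= Rabs (u - v).
Hypothesis f_near : forall T, 0 < T -> exists C, forall e, 0 < e ->
  exists K, forall k, (K <= k)%nat -> forall t, Rabs t <= T ->
    exists z, dZ z0 z <= C /\ dW (f k t) (iotaZ z) <= e.

Lemma near_ball_along t s : strictly_increasing s -> exists C, near_ball C (fun k => f (s k) t).
Proof.
  intro Hs. destruct (f_near (Rabs t + 1)) as [C HC]; [pose proof (Rabs_pos t); lra|].
  exists C. intros e He. destruct (HC e He) as [K HK]. exists K. intros k Hk.
  apply HK; [pose proof (strictly_increasing_ge_id s Hs k); lia | lra].
Qed.

Lemma grid_subseq_cv : exists psi, strictly_increasing psi /\
  forall i, exists y, Un_cv (fun k => dW (f (psi k) (grid i)) (iotaZ y)) 0.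
Proof.
  apply (diagonal_subseq_cv (fun w y => dW w (iotaZ y)) (fun i k => f k (grid i))).
  intros i s Hs. destruct (near_ball_along (grid i) s Hs) as [C HC].
  exact (near_ball_subseq_cv C _ HC).
Qed.

(* equicontinuity: finitely many grid points control a whole compact interval *)
Lemma grid_cv_uniform_cauchy psi :
  (forall i, exists y, Un_cv (fun k => dW (f (psi k) (grid i)) (iotaZ y)) 0) ->
  forall T e, 0 < T -> 0 < e -> exists K, forall k l, (K <= k)%nat -> (K <= l)%nat ->
    forall t, Rabs t <= T -> dW (f (psi k) t) (f (psi l) t) <= e.
Proof.
  intros Hgrid T e HT He.
  destruct (choice _ Hgrid) as [Y HY].
  destruct (grid_cover T (e / 4) HT) as [b [M Hcov]]; [lra|].
  destruct (eventually_forall_le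
              (fun a k => dW (f (psi k) (grid (Cantor.to_nat (a, b))))
                             (iotaZ (Y (Cantor.to_nat (a, b)))) < e / 4) M) as [K HK].
  { intros a _. apply Un_cv_0_lt; [apply HY | lra]. }
  exists K. intros k l Hk Hl t Ht.
  destruct (Hcov t Ht) as [a [Ha Hq]].
  pose proof (HK a k Ha Hk). pose proof (HK a l Ha Hl).
  set (q := grid (Cantor.to_nat (a, b))) in *.
  set (y := iotaZ (Y (Cantor.to_nat (a, b)))) in *.
  pose proof (f_lip (psi k) t q). pose proof (f_lip (psi l) q t).
  pose proof (Rabs_minus_sym t q).
  pose proof (dist_triangle dW hW (f (psi k) t) (f (psi k) q) (f (psi l) t)).
  pose proof (dist_triangle dW hW (f (psi k) q) y (f (psi l) t)).
  pose proof (dist_triangle dW hW y (f (psi l) q) (f (psi l) t)).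
  pose proof (dist_sym dW hW y (f (psi l) q)).
  lra.
Qed.

Theorem lipschitz_subseq_locally_uniform_cv : exists psi gam, strictly_increasing psi /\
  locally_uniform_cv dW (fun k => f (psi k)) (fun t => iotaZ (gam t)).
Proof.
  destruct grid_subseq_cv as [psi [Hpsi Hgrid]].
  pose proof (grid_cv_uniform_cauchy psi Hgrid) as Hcauchy.
  assert (Hpt : forall t, exists y, Un_cv (fun k => dW (f (psi k) t) (iotaZ y)) 0).
  { intro t. destruct (near_ball_along t psi Hpsi) as [C HC].
    apply (near_ball_cauchy_cv C _ HC).
    intros e He. destruct (Hcauchy (Rabs t + 1) e) as [K HK];
      [pose proof (Rabs_pos t); lra | lra |].
    exists K. intros k l Hk Hl. apply HK; [exact Hk | exact Hl | lra]. }
  destruct (choice _ Hpt) as [gam Hgam].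
  exists psi, gam. split; [exact Hpsi|].
  intros T e HT He. destruct (Hcauchy T (e / 2) HT) as [K HK]; [lra|].
  exists K. intros k Hk t Ht.
  destruct (Un_cv_0_lt _ (Hgam t) (e / 2)) as [N HN]; [lra|].
  pose proof (HN (Nat.max K N) ltac:(lia)).
  pose proof (HK k (Nat.max K N) Hk ltac:(lia) t Ht).
  pose proof (dist_triangle dW hW (f (psi k) t) (f (psi (Nat.max K N)) t) (iotaZ (gam t))).
  lra.
Qed.

End ArzelaAscoli.

Section LocallyUniformLimit.
Variable g : nat -> R -> W.
Variable gam : R -> Z.
Hypothesis g_cv : locally_uniform_cv dW g (fun t => iotaZ (gam t)).

Lemma locally_uniform_limit_lipschitz :
  (forall k u v, dW (g k u) (g k v) <= Rabs (u - v)) ->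
  forall u v, dZ (gam u) (gam v) <= Rabs (u - v).
Proof.
  intros Hlip u v. rewrite <- hiotaZ. apply (dist_le_of_approx dW hW). intros e He.
  destruct (locally_uniform_cv_at dW g _ u g_cv e He) as [K1 HK1].
  destruct (locally_uniform_cv_at dW g _ v g_cv e He) as [K2 HK2].
  set (k := Nat.max K1 K2).
  exists (g k u), (g k v). split; [apply HK1; lia|]. split; [apply HK2; lia | apply Hlip].
Qed.

Lemma locally_uniform_limit_stretch :
  (forall t delta, 0 < t -> 0 < delta -> exists K, forall k, (K <= k)%nat ->
     2 * t * (1 - delta) <= dW (g k t) (g k (- t))) ->
  forall t, 0 < t -> 2 * t <= dZ (gam t) (gam (- t)).
Proof.
  intros Hstretch t Ht. rewrite <- hiotaZ. apply (dist_ge_of_approx dW hW). intros e He.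
  destruct (Hstretch t (e / (2 * t)) Ht) as [K0 HK0].
  { apply Rdiv_lt_0_compat; lra. }
  destruct (locally_uniform_cv_at dW g _ t g_cv e He) as [K1 HK1].
  destruct (locally_uniform_cv_at dW g _ (- t) g_cv e He) as [K2 HK2].
  set (k := Nat.max K0 (Nat.max K1 K2)).
  exists (g k t), (g k (- t)). split; [apply HK1; lia|]. split; [apply HK2; lia|].
  pose proof (HK0 k ltac:(lia)) as Hk.
  replace (2 * t * (1 - e / (2 * t))) with (2 * t - e) in Hk by (field; lra). lra.
Qed.

Hypothesis hZ : is_metric dZ.

Lemma locally_uniform_limit_at s z :
  (forall e, 0 < e -> exists K, forall k, (K <= k)%nat -> dW (g k s) (iotaZ z) <= e) ->
  gam s = z.
Proof.
  intro Hz. apply (dist_eq0 dZ hZ), Rle_antisym; [|apply (dist_nonneg dZ hZ)].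
  rewrite <- hiotaZ. apply (dist_le_of_approx dW hW). intros e He.
  destruct (locally_uniform_cv_at dW g _ s g_cv e He) as [K1 HK1].
  destruct (Hz e He) as [K2 HK2].
  set (k := Nat.max K1 K2).
  exists (g k s), (g k s). split; [apply HK1; lia|]. split; [apply HK2; lia|].
  rewrite (dist_refl dW hW). lra.
Qed.

End LocallyUniformLimit.
End ProperTarget.

Section Blowup.
Variables (X : Type) (d : X -> X -> R) (x0 : X) (r : nat -> R).
Variables (Z : Type) (dZ : Z -> Z -> R) (z0 : Z).
Variables (W : Type) (dW : W -> W -> R) (iota : nat -> X -> W) (iotaZ : Z -> W).
Hypothesis hW : is_metric dW.
Hypothesis hiota : forall n x y, dW (iota n x) (iota n y) = d x y / r n.
Hypothesis hiotaZ : forall z z', dW (iotaZ z) (iotaZ z') = dZ z z'.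
Hypothesis hbase : Un_cv (fun n => dW (iota n x0) (iotaZ z0)) 0.
Hypothesis hhaus : forall Rad e, 0 < Rad -> 0 < e -> exists N, forall n, (N <= n)%nat ->
  (forall x, d x0 x / r n <= Rad -> exists z, dW (iota n x) (iotaZ z) <= e) /\
  (forall z, dZ z0 z <= Rad -> exists x, dW (iota n x) (iotaZ z) <= e).
Hypothesis hr_pos : forall n, 0 < r n.
Hypothesis hr_lim : Un_cv r 0.

Lemma distZ_nonneg z z' : 0 <= dZ z z'.
Proof. rewrite <- hiotaZ. apply (dist_nonneg dW hW). Qed.

Lemma realization_approx_ball Rad e : 0 < Rad -> 0 < e ->
  exists N, forall n, (N <= n)%nat -> forall x, dW (iota n x) (iotaZ z0) <= Rad ->
    exists z, dZ z0 z <= Rad + 1 /\ dW (iota n x) (iotaZ z) <= e.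
Proof.
  intros HRad He.
  destruct (Un_cv_0_lt _ hbase 1) as [N1 HN1]; [lra|].
  destruct (hhaus (Rad + 1) (Rmin e 1)) as [N2 HN2]; [lra | apply Rmin_glb_lt; lra |].
  exists (Nat.max N1 N2). intros n Hn x Hx.
  pose proof (HN1 n ltac:(lia)).
  assert (Hxr : d x0 x / r n <= Rad + 1).
  { rewrite <- hiota.
    pose proof (dist_triangle dW hW (iota n x0) (iotaZ z0) (iota n x)).
    pose proof (dist_sym dW hW (iotaZ z0) (iota n x)). lra. }
  destruct (proj1 (HN2 n ltac:(lia)) x Hxr) as [z Hz].
  pose proof (Rmin_l e 1). pose proof (Rmin_r e 1).
  exists z. split; [|lra].
  rewrite <- hiotaZ.
  pose proof (dist_triangle dW hW (iotaZ z0) (iota n x) (iotaZ z)).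
  pose proof (dist_sym dW hW (iotaZ z0) (iota n x)). lra.
Qed.

(* the rescaled Hausdorff approximation puts a point x near z, and density moves it into A *)
Lemma realization_density A : t_density_point d A x0 ->
  forall z e L, 0 < e -> exists n, (L <= n)%nat /\
    exists a, A a /\ dW (iota n a) (iotaZ z) <= e.
Proof.
  intros [_ Hdens] z e L He.
  set (R0 := dZ z0 z). pose proof (distZ_nonneg z0 z) as HR0. fold R0 in HR0.
  pose proof (Rmin_l e 1). pose proof (Rmin_r e 1). set (e1 := Rmin e 1) in *.
  assert (He1 : 0 < e1) by (apply Rmin_glb_lt; lra).
  destruct (hhaus (R0 + 1) (e1 / 2)) as [N1 HN1]; [lra | lra |].
  destruct (Un_cv_0_lt _ hbase 1) as [N2 HN2]; [lra|].
  set (eta := e1 / (2 * (R0 + 3))).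
  assert (Heta : 0 < eta) by (apply Rdiv_lt_0_compat; lra).
  destruct (Hdens 1 Rlt_0_1 eta Heta) as [delta [Hdelta Hd]].
  destruct (Un_cv_0_lt _ hr_lim (delta / (R0 + 3))) as [N3 HN3].
  { apply Rdiv_lt_0_compat; lra. }
  set (n := Nat.max L (Nat.max N1 (Nat.max N2 N3))).
  exists n. split; [lia|].
  destruct (proj2 (HN1 n ltac:(lia)) z ltac:(unfold R0; lra)) as [x Hx].
  pose proof (HN2 n ltac:(lia)). pose proof (HN3 n ltac:(lia)). pose proof (hr_pos n).
  assert (Hxr : d x0 x / r n < R0 + 3).
  { rewrite <- hiota.
    pose proof (dist_triangle dW hW (iota n x0) (iotaZ z0) (iota n x)).
    pose proof (dist_triangle dW hW (iotaZ z0) (iotaZ z) (iota n x)) as Hz.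
    pose proof (dist_sym dW hW (iotaZ z) (iota n x)). rewrite hiotaZ in Hz. fold R0 in Hz. lra. }
  set (rho := (R0 + 3) * r n).
  assert (Hrho : 0 < rho < delta).
  { unfold rho. split; [apply Rmult_lt_0_compat; lra|].
    replace delta with ((R0 + 3) * (delta / (R0 + 3))) by (field; lra).
    apply Rmult_lt_compat_l; lra. }
  assert (Hdx : d x0 x < rho).
  { unfold rho. replace (d x0 x) with (d x0 x / r n * r n) by (field; lra).
    apply Rmult_lt_compat_r; lra. }
  destruct (Hd rho (proj1 Hrho) (proj2 Hrho) x Hdx) as [b [Hb [_ Hxb]]].
  exists b. split; [exact Hb|].
  assert (Hbx : dW (iota n b) (iota n x) <= e1 / 2).
  { rewrite (dist_sym dW hW), hiota.
    replace (e1 / 2) with (eta * rho / r n) by (unfold eta, rho; field; lra).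
    unfold Rdiv. apply Rmult_le_compat_r; [left; apply Rinv_0_lt_compat|]; lra. }
  pose proof (dist_triangle dW hW (iota n b) (iota n x) (iotaZ z)). lra.
Qed.

Lemma realization_density_seq A : t_density_point d A x0 ->
  forall z, exists N a, strictly_increasing N /\
    forall m, A (a m) /\ dW (iota (N m) (a m)) (iotaZ z) <= / (INR m + 1).
Proof.
  intros hx0 z.
  destruct (frequently_strict_subseq
              (fun m n => exists a, A a /\ dW (iota n a) (iotaZ z) <= / (INR m + 1)))
    as [N [HN Hclose]].
  { intros m L. apply (realization_density A hx0), inv_INR_succ_bounds. }
  destruct (choice _ Hclose) as [a Ha]. exists N, a. split; assumption.
Qed.

Lemma rescale_lipschitz (g : R -> X) :
  (forall u v, d (g u) (g v) <= Rabs (u - v)) ->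
  forall n u v, dW (iota n (g (r n * u))) (iota n (g (r n * v))) <= Rabs (u - v).
Proof.
  intros Hg n u v. rewrite hiota. pose proof (hr_pos n).
  pose proof (Hg (r n * u) (r n * v)) as Hd.
  replace (r n * u - r n * v) with (r n * (u - v)) in Hd by ring.
  rewrite Rabs_mult, (Rabs_right (r n)) in Hd by lra.
  replace (Rabs (u - v)) with (r n * Rabs (u - v) / r n) by (field; lra).
  unfold Rdiv. apply Rmult_le_compat_r; [left; apply Rinv_0_lt_compat; lra | exact Hd].
Qed.

Lemma rescaled_curves_near (g : nat -> R -> X) (N : nat -> nat) (z : Z) :
  strictly_increasing N ->
  (forall k u v, d (g k u) (g k v) <= Rabs (u - v)) ->
  (forall k, dW (iota (N k) (g k 0)) (iotaZ z) <= 1) ->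
  forall T, 0 < T -> exists C, forall e, 0 < e ->
    exists K, forall k, (K <= k)%nat -> forall t, Rabs t <= T ->
      exists z', dZ z0 z' <= C /\ dW (iota (N k) (g k (r (N k) * t))) (iotaZ z') <= e.
Proof.
  intros HN Hg H0 T HT. exists (dZ z0 z + T + 1 + 1). intros e He.
  pose proof (distZ_nonneg z0 z).
  destruct (realization_approx_ball (dZ z0 z + T + 1) e) as [K HK]; [lra | exact He |].
  exists K. intros k Hk t Ht. apply HK; [pose proof (strictly_increasing_ge_id N HN k); lia|].
  pose proof (rescale_lipschitz (g k) (Hg k) (N k) t 0) as Hlip.
  rewrite Rmult_0_r, Rminus_0_r in Hlip.
  pose proof (H0 k).
  pose proof (dist_triangle dW hW (iota (N k) (g k (r (N k) * t))) (iota (N k) (g k 0)) (iotaZ z0)).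
  pose proof (dist_triangle dW hW (iota (N k) (g k 0)) (iotaZ z) (iotaZ z0)) as Hz.
  rewrite (dist_sym dW hW (iotaZ z)), hiotaZ in Hz.
  lra.
Qed.

Lemma rescaled_eps_good_stretch eps : Un_cv eps 0 ->
  forall t delta, 0 < t -> 0 < delta -> exists K, forall n g, (K <= n)%nat -> eps_good d eps g ->
    2 * t * (1 - delta) <= dW (iota n (g (r n * t))) (iota n (g (r n * - t))).
Proof.
  intros Heps t delta Ht Hdelta.
  destruct (Un_cv_0_lt _ Heps delta Hdelta) as [K0 HK0].
  set (k0 := Nat.max K0 1).
  assert (Hk0 : 0 < INR k0) by (apply lt_0_INR; lia).
  destruct (Un_cv_0_lt _ hr_lim (/ (INR k0 * t))) as [K HK].
  { apply Rinv_0_lt_compat, Rmult_lt_0_compat; lra. }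
  exists K. intros n g Hn Hg.
  pose proof (hr_pos n). pose proof (HK n Hn) as Hrn.
  set (h := r n * t).
  assert (Hh : 0 < h) by (apply Rmult_lt_0_compat; lra).
  assert (Hhk : h <= / INR k0).
  { unfold h. replace (/ INR k0) with (/ (INR k0 * t) * t) by (field; lra).
    apply Rmult_le_compat_r; lra. }
  pose proof (eps_good_stretch d eps g k0 h Hg ltac:(lia) Hh Hhk) as Hst.
  pose proof (HK0 k0 ltac:(lia)).
  replace (r n * - t) with (- h) by (unfold h; ring).
  rewrite hiota.
  apply Rle_trans with (2 * h * (1 - eps k0) / r n).
  - replace (2 * h * (1 - eps k0) / r n) with (2 * t * (1 - eps k0)) by (unfold h; field; lra).
    apply Rmult_le_compat_l; lra.
  - unfold Rdiv. apply Rmult_le_compat_r; [left; apply Rinv_0_lt_compat; lra | exact Hst].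
Qed.

End Blowup.

Theorem proposition4p2
  (X : Type) (d : X -> X -> R)
  (hmet : is_metric d) (hdoub : doubling d) (hprop : proper d)
  (eps : nat -> R) (heps_pos : forall k, 0 < eps k) (heps_lim : Un_cv eps 0)
  (A : X -> Prop)
  (hA : forall x, A x -> exists g : R -> X, CP_curve d g x /\ eps_good d eps g)
  (x0 : X) (hx0 : t_density_point d A x0)
  (r : nat -> R) (hr_pos : forall n, 0 < r n) (hr_lim : Un_cv r 0)
  (Z : Type) (dZ : Z -> Z -> R) (z0 : Z)
  (hZmet : is_metric dZ) (hZprop : proper dZ)
  (hconv : pGH_converges d x0 r dZ z0) :
  exists (W : Type) (dW : W -> W -> R) (iota : nat -> X -> W) (iotaZ : Z -> W),
    pGH_realization d x0 r dZ z0 dW iota iotaZ /\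
    forall z : Z,
      exists (gam : R -> Z) (s : R) (phi : nat -> nat) (ghat : nat -> R -> X),
        (forall u v, dZ (gam u) (gam v) = Rabs (u - v)) /\
        gam s = z /\
        (forall k, (phi k < phi (S k))%nat) /\
        (forall k, A (ghat k 0) /\ CP_curve d (ghat k) (ghat k 0) /\ eps_good d eps (ghat k)) /\
        (forall T e, 0 < T -> 0 < e -> exists K, forall k, (K <= k)%nat ->
           forall t, Rabs t <= T ->
             dW (iota (phi k) (ghat k (r (phi k) * t))) (iotaZ (gam t)) <= e).
Proof.
  destruct hconv as [W [dW [iota [iotaZ HR]]]].
  exists W, dW, iota, iotaZ. split; [exact HR|].
  destruct HR as [hW [hiota [hiotaZ [hbase hhaus]]]].
  intro z.
  destruct (realization_density_seq _ _ _ _ _ _ _ _ _ _ _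
              hW hiota hiotaZ hbase hhaus hr_pos hr_lim A hx0 z) as [N [a [HN Ha]]].
  destruct (choice _ (fun m => hA (a m) (proj1 (Ha m)))) as [g Hg].
  assert (Hg0 : forall k, g k 0 = a k) by (intro k; exact (CP_curve_at0 d _ _ (proj1 (Hg k)))).
  assert (Hg_lip : forall k u v, d (g k u) (g k v) <= Rabs (u - v))
    by (intro k; exact (CP_curve_lipschitz d _ _ hmet (proj1 (Hg k)))).
  set (f := fun k t => iota (N k) (g k (r (N k) * t))).
  assert (Hf_lip : forall k u v, dW (f k u) (f k v) <= Rabs (u - v))
    by (intro k; exact (rescale_lipschitz _ _ _ _ _ _ hiota hr_pos (g k) (Hg_lip k) (N k))).
  destruct (lipschitz_subseq_locally_uniform_cv W Z dW dZ iotaZ z0 hW hiotaZ hZprop f Hf_lip)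
    as [psi [gam [Hpsi Hcv]]].
  { apply (rescaled_curves_near _ _ _ _ _ _ _ _ _ _ _ hW hiota hiotaZ hbase hhaus hr_pos
             g N z HN Hg_lip).
    intro k. rewrite Hg0. eapply Rle_trans; [apply (proj2 (Ha k)) | apply inv_INR_succ_bounds]. }
  exists gam, 0, (fun k => N (psi k)), (fun k => g (psi k)).
  split; [|split; [|split; [|split]]].
  - apply (lipschitz_stretch_isometry dZ gam hZmet).
    + apply (locally_uniform_limit_lipschitz _ _ _ _ _ hW hiotaZ _ gam Hcv).
      intro k. apply Hf_lip.
    + apply (locally_uniform_limit_stretch _ _ _ _ _ hW hiotaZ _ gam Hcv).
      intros t delta Ht Hdelta.
      destruct (rescaled_eps_good_stretch _ _ _ _ _ _ hiota hr_pos hr_lim eps heps_lim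
                  t delta Ht Hdelta) as [K HK].
      exists K. intros k Hk. apply HK; [|apply Hg].
      pose proof (strictly_increasing_ge_id _ (strictly_increasing_comp N psi HN Hpsi) k). lia.
  - apply (locally_uniform_limit_at _ _ _ _ _ hW hiotaZ _ gam Hcv hZmet).
    intros e He. destruct (inv_INR_succ_lt e He) as [K HK]. exists K. intros k Hk.
    unfold f. rewrite Rmult_0_r, Hg0.
    pose proof (proj2 (Ha (psi k))). pose proof (strictly_increasing_ge_id psi Hpsi k).
    pose proof (HK (psi k) ltac:(lia)). lra.
  - exact (strictly_increasing_comp N psi HN Hpsi).
  - intro k. rewrite Hg0. split; [apply Ha | apply Hg].
  - exact Hcv.
Qed.
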